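(* Let $d$ be an integer and $x>0$ a real number with $0\leqslant d-1\leqslant x/2$. Then $$\sum_{K_{d-1}-d+1<k\leqslant K_{d-1}}\Big(d^2\lfloor x/k\rfloor+\frac{2dx}{\lfloor x/k\rfloor}-x^2F(x/k)\Big)=\frac{8d^2-4d-1}{3}\sqrt{(d-1)x}+O(d^{7/2}x^{-1/2})+O(d^2),$$ where $k$ runs over integers, with absolute implied constants.
   Context: $\lfloor\cdot\rfloor$ denotes the integer part. For an integer $d\geqslant 0$ and real $x>0$, $K_d=K_d(x)=\big\lfloor \big(d+\sqrt{d^2+4dx}\,\big)/2\big\rfloor$. For real $t$, $F(t)=\sum_{n>t-1}\frac{1}{n^2(n+1)^2}$, summed over positive integers $n>t-1$. *)

From Stdlib Require Import Reals ZArith List.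
From Coquelicot Require Import Coquelicot.
Open Scope R_scope.

(* integer part: Int_part r = up r - 1 is the floor of r *)
Definition ifloor (r : R) : Z := Int_part r.

Definition Kd (d : Z) (x : R) : Z :=
  ifloor ((IZR d + sqrt (IZR d ^ 2 + 4 * IZR d * x)) / 2).

Definition F (t : R) : R :=
  Series (fun n : nat =>
    if Rlt_dec 0 (INR n) then
      if Rlt_dec (t - 1) (INR n) then / (INR n ^ 2 * (INR n + 1) ^ 2) else 0
    else 0).

(* sum of f k over integers k with a < k <= b (empty if b <= a) *)
Definition zsum (a b : Z) (f : Z -> R) : R :=
  fold_right Rplus 0
    (map (fun j : nat => f (a + 1 + Z.of_nat j)%Z) (seq 0 (Z.to_nat (b - a)))).

Definition summand (d : Z) (x : R) (k : Z) : R :=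
  let q := IZR (ifloor (x / IZR k)) in
  IZR d ^ 2 * q + 2 * IZR d * x / q - x ^ 2 * F (x / IZR k).

Definition Ssum (d : Z) (x : R) : R :=
  zsum (Kd (d - 1) x - d + 1)%Z (Kd (d - 1) x) (summand d x).

(** Put [m = d - 1]; [K_{d-1}] is the floor of the root [t] of [t (t - m) = m x].  For [k] in
    the range of summation both [m (x/k)] and [sqrt (m x) = sqrt (t (t - m))] lie in
    [[t - m, t]], so [z = x/k] and its integer part [q] are within distance 2 of
    [q0 = sqrt (x/m)].  Telescoping
    [1/(n^2 (n+1)^2) = 1/(3n^3) - 1/(3(n+1)^3) - 1/(3n^3(n+1)^3)] gives
    [F z = 1/(3q^3) + O(q^-5)], so the summand is [phi q + O(m^2/q0)] with
    [phi q = d^2 q + 2dx/q - x^2/(3q^3)].  As [phi q0 = (8d^2 - 4d - 1) q0 / 3] and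
    [phi' q0 = 1], each of the [m] summands is [(8d^2 - 4d - 1) q0 / 3 + O(1 + m^2/q0)],
    and [m * m^2/q0 <= d^(7/2)/sqrt x]. *)
From Stdlib Require Import Reals Lra Lia ZArith List.
From Coquelicot Require Import Coquelicot.
Open Scope R_scope.

Definition tail_from (n0 : nat) (u : nat -> R) (n : nat) : R :=
  if le_dec n0 n then u n else 0.

Lemma sum_n_telescoping_tail (h : nat -> R) (n0 M : nat) :
  sum_n (tail_from n0 (fun n => h n - h (S n))) M
  = tail_from n0 (fun n => h n0 - h (S n)) M.
Proof.
  unfold tail_from; induction M as [|M IH].
  - rewrite sum_O; destruct (le_dec n0 0); [|reflexivity].
    now replace n0 with 0%nat by lia.
  - rewrite sum_Sn, IH; unfold plus; simpl.
    destruct (le_dec n0 M), (le_dec n0 (S M)); try lia; try lra.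
    replace n0 with (S M) by lia; lra.
Qed.

Lemma is_series_telescoping_tail (h : nat -> R) (n0 : nat) :
  is_lim_seq h 0 -> is_series (tail_from n0 (fun n => h n - h (S n))) (h n0).
Proof.
  intros Hh.
  change (is_lim_seq (sum_n (tail_from n0 (fun n => h n - h (S n)))) (h n0)).
  apply (is_lim_seq_ext_loc (fun M => h n0 - h (S M))).
  - exists n0; intros M HM.
    rewrite sum_n_telescoping_tail; unfold tail_from.
    now destruct (le_dec n0 M); [|lia].
  - replace (Finite (h n0)) with (Rbar_minus (h n0) 0) by (simpl; f_equal; ring).
    apply is_lim_seq_minus'; [apply is_lim_seq_const|].
    now apply (is_lim_seq_incr_1 h 0).
Qed.

Lemma is_lim_seq_inv_INR_pow (p : nat) :
  (1 <= p)%nat -> is_lim_seq (fun n => / INR n ^ p) 0.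
Proof.
  intros Hp.
  assert (Hpow : forall k, is_lim_seq (fun n => (/ INR n) ^ k) (0 ^ k)).
  { induction k as [|k IH]; [apply is_lim_seq_const|].
    apply (is_lim_seq_mult' (fun n => / INR n) (fun n => (/ INR n) ^ k)); [|exact IH].
    apply (is_lim_seq_inv _ p_infty); [apply is_lim_seq_INR|discriminate]. }
  rewrite <- (pow_i p) by lia.
  apply (is_lim_seq_ext _ _ _ (fun n => pow_inv (INR n) p)), Hpow.
Qed.

Lemma Series_nonneg (a : nat -> R) :
  (forall n, 0 <= a n) -> ex_series a -> 0 <= Series a.
Proof.
  intros Ha Hex.
  replace 0 with (Series (fun n => 0 * a n)) by (rewrite Series_scal_l; ring).
  apply Series_le; [|exact Hex].
  intros n; specialize (Ha n); lra.
Qed.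

Lemma inv_sq_consecutive_telescoping (a : R) : 0 < a ->
  / (a ^ 2 * (a + 1) ^ 2)
  = / (3 * a ^ 3) - / (3 * (a + 1) ^ 3) - / (3 * a ^ 3 * (a + 1) ^ 3).
Proof. intros Ha; field; lra. Qed.

Lemma inv_cube_consecutive_le (a : R) : 1 <= a ->
  / (3 * a ^ 3 * (a + 1) ^ 3) <= / a ^ 5 - / (a + 1) ^ 5.
Proof.
  intros Ha.
  apply Rminus_le_0.
  replace (/ a ^ 5 - / (a + 1) ^ 5 - / (3 * a ^ 3 * (a + 1) ^ 3))
    with ((14 * a ^ 4 + 28 * a ^ 3 + 29 * a ^ 2 + 15 * a + 3)
          * / (3 * a ^ 5 * (a + 1) ^ 5)) by (field; lra).
  apply Rmult_le_pos.
  - assert (0 <= a ^ 2) by nra; assert (0 <= a ^ 3) by nra; assert (0 <= a ^ 4) by nra.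
    lra.
  - left; apply Rinv_0_lt_compat.
    repeat apply Rmult_lt_0_compat; try apply pow_lt; lra.
Qed.

Lemma Series_tail_inv_sq_consecutive_bounds (n0 : nat) : (1 <= n0)%nat ->
  / (3 * INR n0 ^ 3) - / INR n0 ^ 5
  <= Series (tail_from n0 (fun n => / (INR n ^ 2 * (INR n + 1) ^ 2)))
  <= / (3 * INR n0 ^ 3).
Proof.
  intros Hn0.
  set (h3 := fun n : nat => / (3 * INR n ^ 3)).
  set (h5 := fun n : nat => / INR n ^ 5).
  set (e := tail_from n0 (fun n => / (3 * INR n ^ 3 * (INR n + 1) ^ 3))).
  assert (Hh3 : is_series (tail_from n0 (fun n => h3 n - h3 (S n))) (h3 n0)).
  { apply is_series_telescoping_tail.
    apply (is_lim_seq_ext (fun n => / 3 * / INR n ^ 3)).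
    - intros n; unfold h3; now rewrite Rinv_mult.
    - replace (Finite 0) with (Rbar_mult (/ 3) 0) by (simpl; f_equal; ring).
      apply is_lim_seq_scal_l, is_lim_seq_inv_INR_pow; lia. }
  assert (Hh5 : is_series (tail_from n0 (fun n => h5 n - h5 (S n))) (h5 n0))
    by (apply is_series_telescoping_tail, is_lim_seq_inv_INR_pow; lia).
  assert (He : forall n, 0 <= e n <= tail_from n0 (fun n => h5 n - h5 (S n)) n).
  { intros n; unfold e, h5, tail_from; destruct (le_dec n0 n) as [Hn|]; [|lra].
    assert (1 <= INR n) by (apply (le_INR 1); lia).
    rewrite S_INR; split; [|now apply inv_cube_consecutive_le].
    left; apply Rinv_0_lt_compat.
    repeat apply Rmult_lt_0_compat; try apply pow_lt; lra. }
  assert (Hex5 : ex_series (tail_from n0 (fun n => h5 n - h5 (S n))))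
    by (eexists; exact Hh5).
  assert (Hexe : ex_series e).
  { apply (ex_series_le e (tail_from n0 (fun n => h5 n - h5 (S n)))); [|exact Hex5].
    intros n.
    change (norm (e n)) with (Rabs (e n)); rewrite Rabs_pos_eq; apply He. }
  assert (Hsplit : Series (tail_from n0 (fun n => / (INR n ^ 2 * (INR n + 1) ^ 2)))
                   = h3 n0 - Series e).
  { rewrite <- (is_series_unique _ _ Hh3), <- Series_minus
      by first [exact Hexe | eexists; exact Hh3].
    apply Series_ext; intros n; unfold e, h3, tail_from.
    destruct (le_dec n0 n) as [Hn|]; [|ring].
    assert (1 <= INR n) by (apply (le_INR 1); lia).
    rewrite S_INR; apply inv_sq_consecutive_telescoping; lra. }
  assert (He0 : 0 <= Series e) by (apply Series_nonneg; [apply He|exact Hexe]).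
  assert (He5 : Series e <= h5 n0).
  { rewrite <- (is_series_unique _ _ Hh5); now apply Series_le. }
  rewrite Hsplit; unfold h3, h5 in *; lra.
Qed.

Lemma Int_part_ge_1 (t : R) : 1 <= t -> (1 <= Int_part t)%Z.
Proof.
  intros Ht; destruct (base_Int_part t) as [_ Hlt].
  assert (Hpos : IZR 0 < IZR (Int_part t)) by lra.
  apply lt_IZR in Hpos; lia.
Qed.

(* [n > t - 1] is the same as [n >= floor t] for integers [n]. *)
Lemma F_eq_Series_tail (t : R) : 1 <= t ->
  F t = Series (tail_from (Z.to_nat (Int_part t))
                  (fun n => / (INR n ^ 2 * (INR n + 1) ^ 2))).
Proof.
  intros Ht.
  pose proof (Int_part_ge_1 t Ht) as Hq.
  destruct (base_Int_part t) as [Hqt Htq].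
  apply Series_ext; intros n; unfold tail_from.
  destruct (le_dec (Z.to_nat (Int_part t)) n) as [Hn|Hn].
  - assert (Hle : IZR (Int_part t) <= INR n).
    { rewrite INR_IZR_INZ; apply IZR_le; lia. }
    assert (1 <= IZR (Int_part t)) by (apply IZR_le; lia).
    destruct (Rlt_dec 0 (INR n)); [|lra].
    destruct (Rlt_dec (t - 1) (INR n)); lra.
  - assert (Hle : INR n + 1 <= IZR (Int_part t)).
    { rewrite INR_IZR_INZ, <- plus_IZR; apply IZR_le; lia. }
    destruct (Rlt_dec 0 (INR n)); [|reflexivity].
    destruct (Rlt_dec (t - 1) (INR n)); [lra|reflexivity].
Qed.

Lemma F_bounds (t : R) : 1 <= t ->
  / (3 * IZR (Int_part t) ^ 3) - / IZR (Int_part t) ^ 5 <= F t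
  <= / (3 * IZR (Int_part t) ^ 3).
Proof.
  intros Ht.
  pose proof (Int_part_ge_1 t Ht) as Hq.
  replace (IZR (Int_part t)) with (INR (Z.to_nat (Int_part t)))
    by (rewrite INR_IZR_INZ, Z2Nat.id; [reflexivity|lia]).
  rewrite F_eq_Series_tail by exact Ht.
  apply Series_tail_inv_sq_consecutive_bounds; lia.
Qed.

(* [phi q - phi q0] for [d = m + 1], [x = m q0^2]; the factor tends to [phi' q0 = 1] as [q -> q0]. *)
Lemma phi_expansion (m q q0 : R) : q <> 0 ->
  (m + 1) ^ 2 * q + 2 * (m + 1) * (m * q0 ^ 2) / q - (m * q0 ^ 2) ^ 2 / (3 * q ^ 3)
  - (8 * (m + 1) ^ 2 - 4 * (m + 1) - 1) / 3 * q0
  = (q - q0) * (1 - 2 * m * (q0 / q - 1)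
                + m ^ 2 * (q0 / q - 1) ^ 2 * (4 + (q0 / q - 1)) / 3).
Proof. intros Hq; field; exact Hq. Qed.

Lemma phi_remainder_factor_bound (m s r : R) :
  1 <= m -> 0 < r -> -1 < s < 2 -> Rabs s <= 6 / r ->
  Rabs (1 - 2 * m * s + m ^ 2 * s ^ 2 * (4 + s) / 3) <= 1 + 36 * m ^ 2 / r.
Proof.
  intros Hm Hr Hs Hsr.
  assert (Hw : 0 <= / r) by (left; apply Rinv_0_lt_compat, Hr).
  change (Rabs s <= 6 * / r) in Hsr.
  change (Rabs (1 - 2 * m * s + m ^ 2 * s ^ 2 * (4 + s) / 3) <= 1 + 36 * m ^ 2 * / r).
  assert (Hlin : Rabs (2 * m * s) <= 12 * m ^ 2 * / r).
  { rewrite Rabs_mult, (Rabs_pos_eq (2 * m)) by lra.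
    assert (m <= m ^ 2) by nra.
    apply Rle_trans with (2 * m * (6 * / r)); [apply Rmult_le_compat_l; lra|nra]. }
  assert (Hcub : 0 <= m ^ 2 * s ^ 2 * (4 + s) / 3 <= 24 * m ^ 2 * / r).
  { assert (Hs2 : s ^ 2 <= 2 * Rabs s).
    { rewrite <- pow2_abs.
      assert (Rabs s < 2) by (apply Rabs_def1; lra).
      pose proof (Rabs_pos s); nra. }
    assert (0 <= m ^ 2) by nra.
    split; [apply Rmult_le_pos; [apply Rmult_le_pos|]; nra|].
    apply Rle_trans with (m ^ 2 * (2 * Rabs s) * 6 / 3); [|nra].
    apply Rmult_le_compat_r; [lra|].
    apply Rmult_le_compat; nra. }
  pose proof (Rabs_triang (1 - 2 * m * s) (m ^ 2 * s ^ 2 * (4 + s) / 3)).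
  pose proof (Rabs_triang 1 (- (2 * m * s))).
  rewrite Rabs_R1, Rabs_Ropp in *.
  rewrite (Rabs_pos_eq (m ^ 2 * _ * _ / 3)) in * by lra.
  unfold Rminus in *; lra.
Qed.

Lemma ratio_near_one (q q0 : R) : 0 < q0 < 3 * q -> Rabs (q - q0) <= 2 ->
  -1 < q0 / q - 1 < 2 /\ Rabs (q0 / q - 1) <= 6 / q0.
Proof.
  intros Hq0 Hgap.
  assert (Hq : 0 < q) by lra.
  split.
  - assert (q0 / q < 3).
    { apply (Rmult_lt_reg_r q); [exact Hq|].
      replace (q0 / q * q) with q0 by (field; lra); lra. }
    assert (0 < q0 / q) by (apply Rdiv_lt_0_compat; lra).
    lra.
  - replace (q0 / q - 1) with (- (q - q0) / q) by (field; lra).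
    rewrite Rabs_div, Rabs_Ropp, (Rabs_pos_eq q) by lra.
    apply Rle_trans with (2 / q); [apply Rmult_le_compat_r; [left; apply Rinv_0_lt_compat|]; lra|].
    apply (Rmult_le_reg_r (q * q0)); [nra|].
    replace (2 / q * (q * q0)) with (2 * q0) by (field; lra).
    replace (6 / q0 * (q * q0)) with (6 * q) by (field; lra).
    lra.
Qed.

Lemma sq_scaled_sq_div_pow5_le (m q q0 : R) : 0 < q0 < 3 * q ->
  (m * q0 ^ 2) ^ 2 / q ^ 5 <= 243 * m ^ 2 / q0.
Proof.
  intros Hq0.
  assert (Hq5 : (q0 / 3) ^ 5 <= q ^ 5) by (apply pow_incr; lra).
  replace ((m * q0 ^ 2) ^ 2 / q ^ 5) with (243 * m ^ 2 / q0 * ((q0 / 3) ^ 5 / q ^ 5))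
    by (field; lra).
  rewrite <- (Rmult_1_r (243 * m ^ 2 / q0)) at 2.
  apply Rmult_le_compat_l.
  - apply Rdiv_le_0_compat; nra.
  - apply (Rdiv_le_1 _ _ (pow_lt q 5 ltac:(lra))), Hq5.
Qed.

Lemma summand_deviation_near_q0 (m x q0 z : R) :
  1 <= m -> 0 < q0 -> x = m * q0 ^ 2 -> 1 <= z -> Rabs (z - q0) <= 1 ->
  let q := IZR (Int_part z) in
  Rabs ((m + 1) ^ 2 * q + 2 * (m + 1) * x / q - x ^ 2 * F z
        - (8 * (m + 1) ^ 2 - 4 * (m + 1) - 1) / 3 * q0)
  <= 2 + 315 * m ^ 2 / q0.
Proof.
  intros Hm Hq0 -> Hz Hzq0 q.
  destruct (base_Int_part z) as [Hqz Hzq]; fold q in Hqz, Hzq.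
  assert (Hq : 1 <= q) by (apply IZR_le, Int_part_ge_1, Hz).
  apply Rabs_le_between in Hzq0.
  assert (Hgap : Rabs (q - q0) <= 2) by (apply Rabs_le; lra).
  destruct (ratio_near_one q q0 ltac:(lra) Hgap) as [Hs Hsr].
  pose proof (phi_remainder_factor_bound m _ q0 Hm Hq0 Hs Hsr) as HB.
  destruct (F_bounds z Hz) as [HF1 HF2]; fold q in HF1, HF2.
  set (E := / (3 * q ^ 3) - F z).
  assert (HE : 0 <= (m * q0 ^ 2) ^ 2 * E <= 243 * m ^ 2 / q0).
  { assert (0 <= (m * q0 ^ 2) ^ 2) by nra.
    split; [apply Rmult_le_pos; unfold E; lra|].
    eapply Rle_trans; [|apply (sq_scaled_sq_div_pow5_le m q q0); lra].
    unfold Rdiv at 1; apply Rmult_le_compat_l; unfold E; lra. }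
  replace ((m + 1) ^ 2 * q + 2 * (m + 1) * (m * q0 ^ 2) / q - (m * q0 ^ 2) ^ 2 * F z
           - (8 * (m + 1) ^ 2 - 4 * (m + 1) - 1) / 3 * q0)
    with ((m + 1) ^ 2 * q + 2 * (m + 1) * (m * q0 ^ 2) / q
          - (m * q0 ^ 2) ^ 2 / (3 * q ^ 3)
          - (8 * (m + 1) ^ 2 - 4 * (m + 1) - 1) / 3 * q0 + (m * q0 ^ 2) ^ 2 * E)
    by (unfold E, Rdiv; ring).
  rewrite phi_expansion by lra.
  eapply Rle_trans; [apply Rabs_triang|].
  rewrite Rabs_mult, (Rabs_pos_eq ((m * q0 ^ 2) ^ 2 * E)) by lra.
  assert (Rabs (q - q0) * Rabs (1 - 2 * m * (q0 / q - 1)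
                                + m ^ 2 * (q0 / q - 1) ^ 2 * (4 + (q0 / q - 1)) / 3)
          <= 2 * (1 + 36 * m ^ 2 / q0))
    by (apply Rmult_le_compat; try apply Rabs_pos; assumption).
  unfold Rdiv in *; lra.
Qed.

Lemma geometric_mean_between (a b : R) : 0 <= a <= b -> a <= sqrt (a * b) <= b.
Proof.
  intros Hab.
  rewrite <- (sqrt_square a) at 1 by lra; rewrite <- (sqrt_square b) at 3 by lra.
  split; apply sqrt_le_1_alt; nra.
Qed.

Lemma quotient_near_sqrt (m x t k : R) :
  0 < m -> 2 * m <= x -> 0 <= t -> t * (t - m) = m * x -> t - m < k <= t ->
  1 <= x / k /\ Rabs (x / k - sqrt (m * x) / m) <= 1.
Proof.
  intros Hm Hx Ht Htt [Hk1 Hk2].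
  assert (Ht2 : 2 * m <= t) by nra.
  assert (Hk : 0 < k) by lra.
  assert (Hlow : t - m <= m * (x / k)).
  { apply (Rmult_le_reg_r k); [exact Hk|].
    replace (m * (x / k) * k) with (t * (t - m)) by (rewrite Htt; field; lra).
    nra. }
  assert (Hhigh : m * (x / k) < t).
  { apply (Rmult_lt_reg_r k); [exact Hk|].
    replace (m * (x / k) * k) with (t * (t - m)) by (rewrite Htt; field; lra).
    nra. }
  pose proof (geometric_mean_between (t - m) t) as Hg.
  replace ((t - m) * t) with (m * x) in Hg by (rewrite <- Htt; ring).
  specialize (Hg ltac:(lra)).
  split; [nra|].
  replace (x / k - sqrt (m * x) / m) with ((m * (x / k) - sqrt (m * x)) / m)
    by (field; lra).
  rewrite Rabs_div by lra; rewrite (Rabs_pos_eq m) by lra.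
  apply (Rmult_le_reg_r m); [exact Hm|].
  unfold Rdiv; rewrite Rmult_assoc, Rinv_l, Rmult_1_r, Rmult_1_l by lra.
  apply Rabs_le; lra.
Qed.

Definition Kd_root (m x : R) : R := (m + sqrt (m ^ 2 + 4 * m * x)) / 2.

Lemma Kd_root_spec (m x : R) : 0 <= m -> 0 <= x ->
  0 <= Kd_root m x /\ Kd_root m x * (Kd_root m x - m) = m * x.
Proof.
  intros Hm Hx; unfold Kd_root.
  pose proof (sqrt_pos (m ^ 2 + 4 * m * x)).
  pose proof (sqrt_sqrt (m ^ 2 + 4 * m * x) ltac:(nra)).
  split; nra.
Qed.

Lemma fold_right_map_seq_deviation (f : nat -> R) (c B : R) (n s : nat) :
  (forall j, (s <= j < s + n)%nat -> Rabs (f j - c) <= B) ->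
  Rabs (fold_right Rplus 0 (map f (seq s n)) - INR n * c) <= INR n * B.
Proof.
  revert s; induction n as [|n IH]; intros s Hs.
  - simpl; rewrite Rmult_0_l, Rminus_0_r, Rabs_R0; lra.
  - simpl seq; simpl map; simpl fold_right; rewrite S_INR.
    replace (f s + fold_right Rplus 0 (map f (seq (S s) n)) - (INR n + 1) * c)
      with ((f s - c) + (fold_right Rplus 0 (map f (seq (S s) n)) - INR n * c)) by ring.
    pose proof (Rabs_triang (f s - c) (fold_right Rplus 0 (map f (seq (S s) n)) - INR n * c)).
    assert (Rabs (f s - c) <= B) by (apply Hs; lia).
    assert (Rabs (fold_right Rplus 0 (map f (seq (S s) n)) - INR n * c) <= INR n * B)
      by (apply IH; intros j Hj; apply Hs; lia).
    lra.
Qed.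

Lemma zsum_deviation (a b : Z) (f : Z -> R) (c B : R) : (a <= b)%Z ->
  (forall k, (a < k <= b)%Z -> Rabs (f k - c) <= B) ->
  Rabs (zsum a b f - IZR (b - a) * c) <= IZR (b - a) * B.
Proof.
  intros Hab Hf.
  replace (IZR (b - a)) with (INR (Z.to_nat (b - a)))
    by (rewrite INR_IZR_INZ, Z2Nat.id; [reflexivity|lia]).
  apply fold_right_map_seq_deviation; intros j Hj.
  apply Hf; lia.
Qed.

Lemma total_deviation_le (m x : R) : 0 <= m -> 0 < x ->
  m * (2 + 315 * m ^ 2 / (sqrt (m * x) / m))
  <= 315 * ((m + 1) ^ 3 * sqrt (m + 1) / sqrt x + (m + 1) ^ 2).
Proof.
  intros Hm Hx.
  assert (Hsx : 0 < sqrt x) by (apply sqrt_lt_R0; lra).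
  assert (Hmain : 0 <= (m + 1) ^ 3 * sqrt (m + 1) / sqrt x).
  { apply Rdiv_le_0_compat; [apply Rmult_le_pos; [apply pow_le; lra|apply sqrt_pos]|lra]. }
  destruct (Req_dec m 0) as [->|Hm0]; [nra|].
  assert (Hsm : sqrt m * sqrt m = m) by (apply sqrt_sqrt; lra).
  assert (0 < sqrt m) by (apply sqrt_lt_R0; lra).
  assert (Hq0 : sqrt (m * x) / m = sqrt x / sqrt m).
  { rewrite sqrt_mult by lra.
    apply (Rmult_eq_reg_r (m * sqrt m)); [|nra].
    replace (sqrt m * sqrt x / m * (m * sqrt m)) with (sqrt x * (sqrt m * sqrt m))
      by (field; lra).
    replace (sqrt x / sqrt m * (m * sqrt m)) with (sqrt x * m) by (field; lra).
    now rewrite Hsm. }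
  replace (m * (2 + 315 * m ^ 2 / (sqrt (m * x) / m)))
    with (2 * m + 315 * (m ^ 3 * sqrt m / sqrt x)) by (rewrite Hq0; field; lra).
  assert (m ^ 3 * sqrt m <= (m + 1) ^ 3 * sqrt (m + 1)).
  { apply Rmult_le_compat; [apply pow_le; lra|apply sqrt_pos|apply pow_incr; lra|].
    apply sqrt_le_1_alt; lra. }
  assert (m ^ 3 * sqrt m / sqrt x <= (m + 1) ^ 3 * sqrt (m + 1) / sqrt x)
    by (apply Rmult_le_compat_r; [left; apply Rinv_0_lt_compat|]; lra).
  nra.
Qed.

Lemma summand_deviation_on_range (d k : Z) (x : R) :
  0 < x -> IZR d - 1 <= x / 2 ->
  (Kd (d - 1) x - d + 1 < k <= Kd (d - 1) x)%Z ->
  Rabs (summand d x k - (8 * IZR d ^ 2 - 4 * IZR d - 1) / 3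
                          * (sqrt ((IZR d - 1) * x) / (IZR d - 1)))
  <= 2 + 315 * (IZR d - 1) ^ 2 / (sqrt ((IZR d - 1) * x) / (IZR d - 1)).
Proof.
  intros Hx Hmx Hk.
  set (m := IZR d - 1) in *.
  assert (Hm : 1 <= m) by (unfold m; assert (IZR 2 <= IZR d) by (apply IZR_le; lia); lra).
  set (t := Kd_root m x).
  destruct (Kd_root_spec m x ltac:(lra) ltac:(lra)) as [Ht Htt]; fold t in Ht, Htt.
  assert (HK : IZR (Kd (d - 1) x) <= t < IZR (Kd (d - 1) x) + 1).
  { replace (Kd (d - 1) x) with (Int_part t)
      by (unfold Kd, ifloor, t, Kd_root, m; now rewrite minus_IZR).
    destruct (base_Int_part t); lra. }
  assert (Hkt : t - m < IZR k <= t).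
  { assert (Hk1 : IZR (Kd (d - 1) x - d + 2) <= IZR k) by (apply IZR_le; lia).
    assert (Hk2 : IZR k <= IZR (Kd (d - 1) x)) by (apply IZR_le; lia).
    rewrite plus_IZR, minus_IZR in Hk1; unfold m in *; lra. }
  destruct (quotient_near_sqrt m x t (IZR k)) as [Hz1 Hz2]; try lra.
  set (q0 := sqrt (m * x) / m) in *.
  assert (Hq0 : 0 < q0) by (apply Rdiv_lt_0_compat; [apply sqrt_lt_R0; nra|lra]).
  assert (Hxq0 : x = m * q0 ^ 2).
  { unfold q0; replace (m * (sqrt (m * x) / m) ^ 2) with (sqrt (m * x) * sqrt (m * x) / m)
      by (field; lra).
    rewrite sqrt_sqrt by nra; field; lra. }
  unfold summand, ifloor; replace (IZR d) with (m + 1) by (unfold m; ring).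
  exact (summand_deviation_near_q0 m x q0 (x / IZR k) Hm Hq0 Hxq0 Hz1 Hz2).
Qed.

Theorem proposition9 :
  exists C : R, forall (d : Z) (x : R),
    0 < x -> 0 <= IZR d - 1 <= x / 2 ->
    Rabs (Ssum d x
          - (8 * IZR d ^ 2 - 4 * IZR d - 1) / 3 * sqrt ((IZR d - 1) * x))
      <= C * (IZR d ^ 3 * sqrt (IZR d) / sqrt x + IZR d ^ 2).
Proof.
  exists 315; intros d x Hx [Hm0 Hmx].
  assert (Hd : (1 <= d)%Z) by (apply le_IZR; lra).
  set (K := Kd (d - 1) x).
  assert (Hlen : IZR (K - (K - d + 1)) = IZR d - 1)
    by (replace (K - (K - d + 1))%Z with (d - 1)%Z by ring; now rewrite minus_IZR).
  set (m := IZR d - 1) in *.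
  set (c := (8 * IZR d ^ 2 - 4 * IZR d - 1) / 3 * (sqrt (m * x) / m)).
  assert (Htarget : (8 * IZR d ^ 2 - 4 * IZR d - 1) / 3 * sqrt (m * x) = m * c).
  { destruct (Req_dec m 0) as [Hm|Hm].
    - rewrite Hm, Rmult_0_l, sqrt_0; ring.
    - unfold c; field; exact Hm. }
  unfold Ssum; fold K; rewrite Htarget, <- Hlen.
  eapply Rle_trans;
    [apply (zsum_deviation _ _ _ c (2 + 315 * m ^ 2 / (sqrt (m * x) / m)))|].
  - lia.
  - intros k Hk; exact (summand_deviation_on_range d k x Hx Hmx Hk).
  - rewrite Hlen; replace (IZR d) with (m + 1) by (unfold m; ring).
    apply total_deviation_le; lra.
Qed.
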